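(* Let $0<\alpha<\beta<1$ and $t\geq1$. Let $\mathcal{P}_t'$ be the set of real polynomials $f$ of degree at most $t$ with $f(0)=0$ and $f(1)=1$. Any minimizer $f^\star\in\mathcal{P}_t'$ of \[ \frac{\max_{\lambda\in[0,\alpha]}|f(\lambda)|}{\min_{\lambda\in[\beta,1]}|f(\lambda)|} \] over $\mathcal{P}_t'$ is $t$-equioscillatory on $[0,\alpha]$.
   Context: A polynomial $f$ is called $t$-equioscillatory on an interval $[a,b]$ if there exist points $a\le\gamma_0<\gamma_1<\dots<\gamma_{t-1}\le b$ such that $|f(\gamma_s)|=\max_{\lambda\in[a,b]}|f(\lambda)|$ for all $0\le s\le t-1$ and $f(\gamma_0)=-f(\gamma_1)=f(\gamma_2)=-f(\gamma_3)=\cdots$. The objective is taken to be $+\infty$ when the denominator vanishes. *)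

From HB Require Import structures.
From mathcomp Require Import all_boot all_order all_algebra.
From mathcomp Require Import all_classical all_reals.
From mathcomp Require Import ereal.
Set Implicit Arguments. Unset Strict Implicit. Unset Printing Implicit Defensive.
Import Order.TTheory GRing.Theory Num.Theory.
Local Open Scope ring_scope.
Local Open Scope classical_set_scope.

Section Defs.
Variable R : realType.

(* max_{lambda in [a,b]} |f(lambda)|  (attained for polynomials, so sup = max) *)
Definition pmax (f : {poly R}) (a b : R) : R :=
  sup [set `|f.[x]| | x in [set x : R | a <= x <= b]].

Definition pmin (f : {poly R}) (a b : R) : R :=
  inf [set `|f.[x]| | x in [set x : R | a <= x <= b]].

Definition Pt' (t : nat) : set {poly R} :=
  [set f : {poly R} | (size f <= t.+1)%N /\ f.[0] = 0 /\ f.[1] = 1].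

Definition ratio_obj (alpha beta : R) (f : {poly R}) : \bar R :=
  if pmin f beta 1 == 0 then +oo%E
  else (pmax f 0 alpha / pmin f beta 1)%:E.

Definition equiosc (t : nat) (f : {poly R}) (a b : R) : Prop :=
  exists gamma : nat -> R,
    (forall s, (s < t)%N -> a <= gamma s <= b) /\
    (forall s, (s.+1 < t)%N -> gamma s < gamma s.+1) /\
    (forall s, (s < t)%N -> `|f.[gamma s]| = pmax f a b) /\
    (forall s, (s.+1 < t)%N -> f.[gamma s.+1] = - f.[gamma s]).
End Defs.

From HB Require Import structures.
From mathcomp Require Import all_boot all_order all_algebra.
From mathcomp Require Import all_classical all_reals.
From mathcomp Require Import ereal.
From mathcomp Require Import topology normedtype derive realfun.
From mathcomp Require Import polyrcf.
From mathcomp Require Import ring lra zify.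
Import Order.TTheory GRing.Theory Num.Theory.
Import numFieldNormedType.Exports.
Set Implicit Arguments. Unset Strict Implicit. Unset Printing Implicit Defensive.
Local Open Scope ring_scope.

(* Suppose the minimiser f does not t-equioscillate on [0, alpha]. Its extremal
   points there then form at most t - 1 runs of constant sign, so there is a
   polynomial h of degree at most t, vanishing at 0, with one root between
   consecutive runs and the sign of f on each run; an extra linear factor makes h
   negative on [beta, 1]. For small eps > 0, f - eps h has a smaller maximum on
   [0, alpha] and larger values on [beta, 1], and after renormalising its value
   at 1 it beats f, a contradiction. *)

Section Equioscillation.
Variable R : realType.
Implicit Types (p f g h q : {poly R}) (a b k x : R).

Lemma continuous_norm_horner p : continuous (fun x : R => `|p.[x]|).
Proof.
by move=> x; apply: continuous_comp; [exact: continuous_horner | exact: norm_continuous].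
Qed.

Lemma pmax_max p a b : a <= b ->
  exists2 c, a <= c <= b &
    pmax p a b = `|p.[c]| /\ forall x, a <= x <= b -> `|p.[x]| <= `|p.[c]|.
Proof.
move=> ab; have [c cab cmax] :=
  EVT_max ab (continuous_subspaceT (@continuous_norm_horner p)).
have {}cmax x : a <= x <= b -> `|p.[x]| <= `|p.[c]|.
  by move=> xab; apply: cmax; rewrite in_itv.
exists c; first by rewrite in_itv in cab.
split=> //; apply/eqP; rewrite eq_le; apply/andP; split.
  by apply: ge_sup; [exists `|p.[c]|, c | move=> _ [x xab <-]; apply: cmax].
by apply: ub_le_sup; [exists `|p.[c]| => _ [x xab <-]; apply: cmax | exists c].
Qed.

Lemma pmax_attained p a b : a <= b ->
  exists2 c, a <= c <= b & pmax p a b = `|p.[c]|.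
Proof. by move=> /(pmax_max p) [c cab [-> _]]; exists c. Qed.

Lemma pmax_ub p a b x : a <= x <= b -> `|p.[x]| <= pmax p a b.
Proof.
move=> xab; have ab : a <= b by case/andP: xab; apply: le_trans.
by have [c _ [-> cmax]] := pmax_max p ab; apply: cmax.
Qed.

Lemma pmax_ge0 p a b : a <= b -> 0 <= pmax p a b.
Proof. by move=> ab; apply: le_trans (normr_ge0 p.[a]) (pmax_ub p _); rewrite lexx. Qed.

Lemma pmax_lt p a b L : a <= b ->
  (forall x, a <= x <= b -> `|p.[x]| < L) -> pmax p a b < L.
Proof. by move=> /(pmax_attained p) [c cab ->]; apply. Qed.

Lemma pmin_lb p a b x : a <= x <= b -> pmin p a b <= `|p.[x]|.
Proof. by move=> xab; apply: ge_inf; [exists 0 => _ [y _ <-] | exists x]. Qed.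

Lemma pmin_ge p a b L : a <= b ->
  (forall x, a <= x <= b -> L <= `|p.[x]|) -> L <= pmin p a b.
Proof.
move=> ab pL; apply: lb_le_inf; last by move=> _ [y yab <-]; apply: pL.
by exists `|p.[a]|, a; rewrite /= ?lexx.
Qed.

Lemma sorted_level_set p M a b : 0 <= M -> `|p.[a]| != M ->
  exists s : seq R, sorted <%R s /\
    forall y, (y \in s) = (a < y <= b) && (`|p.[y]| == M).
Proof.
move=> M0 pa; set P := p * p - (M ^+ 2)%:P.
have rootP y : root P y = (`|p.[y]| == M).
  rewrite /root /P !hornerE subr_eq0 -(@eqrXn2 _ 2 _ _ isT (normr_ge0 _) M0).
  by rewrite real_normK ?num_real // expr2.
have P0 : P != 0 by apply: contra pa => /eqP P0; rewrite -rootP P0 root0.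
exists [seq y <- roots P a (b + 1) | y <= b]; split.
  by apply: sorted_filter; [exact: lt_trans | exact: sorted_roots].
move=> y; rewrite mem_filter -rootP.
case: (leP y b) => yb /=; last by rewrite !andbF.
rewrite andbT; have [ay|ya] := ltP a y.
  by rewrite -root_is_roots // in_itv /= ay; lra.
by apply/negbTE/negP => /roots_in; rewrite in_itv /=; lra.
Qed.

Lemma prod_subr_gt0 (c : seq R) x :
  all (fun ci => x < ci) c -> 0 < \prod_(ci <- c) (ci - x).
Proof.
elim: c => [|a c IHc] /=; first by rewrite big_nil.
by case/andP=> xa xc; rewrite big_cons mulr_gt0 ?IHc ?subr_gt0.
Qed.

Lemma signr_prod_subr_gt0 (c : seq R) y :
  all (fun ci => ci < y) c -> 0 < (-1) ^+ size c * \prod_(ci <- c) (ci - y).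
Proof.
elim: c => [|a c IHc] /=; first by rewrite big_nil mulr1.
case/andP=> ay /IHc; rewrite big_cons exprS.
have -> : -1 * (-1) ^+ size c * ((a - y) * \prod_(ci <- c) (ci - y))
  = (y - a) * ((-1) ^+ size c * \prod_(ci <- c) (ci - y)) by ring.
by apply: mulr_gt0; rewrite subr_gt0.
Qed.

Lemma mulr_gt0_trans (a b c : R) : 0 < a * b -> 0 < b * c -> 0 < a * c.
Proof. nra. Qed.

Definition sign_change (F : R -> R) (a b : R) := (a < b) && (F a * F b < 0).

(* [c] collects the midpoint of every sign change along [x :: s] and [g] the
   right endpoint of every sign change. *)
Lemma alternation_separators (F : R -> R) (B x : R) (s : seq R) :
  sorted <%R (x :: s) -> all (fun e => F e != 0) (x :: s) ->
  all (fun e => e < B) (x :: s) ->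
  exists c g : seq R, [/\ all (fun ci => x < ci < B) c,
    {in x :: s, forall e, 0 < F x * \prod_(ci <- c) (ci - e) * F e},
    size g = size c, {subset g <= x :: s} & sorted (sign_change F) (x :: g)].
Proof.
elim: s x => [|y s IHs] x.
  move=> _ /= /andP[Fx _] _; exists [::], [::]; split=> // e.
  by rewrite inE => /eqP->; rewrite big_nil mulr1 -expr2 exprn_even_gt0.
move=> /= /andP[xy sys] /andP[Fx Fys] /andP[_ yBs].
have [c [g [cB cF sg gs altg]]] := IHs y sys Fys yBs.
have ys_ge e : e \in y :: s -> y <= e.
  rewrite inE => /predU1P[-> //|es].
  by apply/ltW; move/allP: (order_path_min lt_trans sys); apply.
have xcB : all (fun ci => x < ci < B) c.
  by apply/allP=> ci /(allP cB) /andP[yci ->]; rewrite (lt_trans xy).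
have Pcx : 0 < \prod_(ci <- c) (ci - x).
  by apply/prod_subr_gt0/allP=> ci /(allP xcB) /andP[].
have Fx2 : 0 < F x * F x by rewrite -expr2 exprn_even_gt0.
have [FxFy|] := ltP 0 (F x * F y).
  exists c, g; split=> //.
  - by move=> e; rewrite inE => /predU1P[->|/cF]; nra.
  - by move=> z /gs zs; rewrite inE zs orbT.
  case: g {sg gs} altg => [|z g] //= /andP[/andP[yz FyFz] ->].
  by rewrite /sign_change (lt_trans xy yz) andbT /=; nra.
have Fy : F y != 0 by case/andP: Fys.
rewrite le_eqVlt mulf_eq0 (negbTE Fx) (negbTE Fy) /=.
move=> FxFy; set m := (x + y) / 2.
have xm : x < m by rewrite /m; lra.
have my : m < y by rewrite /m; lra.
exists (m :: c), (y :: g); split=> /=.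
- by case/andP: yBs => yB _; rewrite xm (lt_trans my yB).
- move=> e; rewrite inE big_cons => /predU1P[->|ey].
    by rewrite -mulrA mulrCA mulr_gt0 // mulr_gt0 // subr_gt0.
  have me : m < e by apply: lt_le_trans my (ys_ge e ey).
  set P := \prod_(ci <- c) (ci - e).
  have Fxe : 0 < - F x * (P * F e).
    by apply: (mulr_gt0_trans (b := F y)); rewrite ?mulNr ?oppr_gt0 // mulrA cF.
  have -> : F x * ((m - e) * P) * F e = (e - m) * (- F x * (P * F e)) by ring.
  by rewrite mulr_gt0 // subr_gt0.
- by rewrite sg.
- by move=> z; rewrite inE => /predU1P[->|/gs zs]; rewrite inE ?mem_head ?zs orbT.
- by rewrite /sign_change xy FxFy.
Qed.

Lemma equiosc_pmax0 t f a b : a < b -> pmax f a b = 0 -> equiosc t f a b.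
Proof.
move=> ab f0; have fab x : a <= x <= b -> f.[x] = 0.
  by move=> /(pmax_ub f); rewrite f0 normr_le0 => /eqP.
pose u s : R := 2^-1 ^+ s.
have u_gt0 s : 0 < u s by apply: exprn_gt0; lra.
have u_le1 s : u s <= 1 by apply: exprn_ile1; lra.
have gab s : a <= b - (b - a) * u s <= b.
  by have := u_gt0 s; have := u_le1 s; move=> *; apply/andP; split; nra.
exists (fun s => b - (b - a) * u s); split; [|split; [|split]] => s _.
- exact: gab.
- by rewrite /u exprS -/(u s); have := u_gt0 s; nra.
- by rewrite fab ?gab // normr0 f0.
- by rewrite !fab ?gab // oppr0.
Qed.

Lemma opp_of_norm_eq_mul_lt0 (x y : R) : `|x| = `|y| -> x * y < 0 -> y = - x.
Proof.
move/eqP; rewrite eqr_norm2 => /predU1P[->|/eqP->]; last by rewrite opprK.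
by rewrite -expr2 ltNge sqr_ge0.
Qed.

Lemma equiosc_of_alternation t f a b x (g : seq R) :
  (t <= size (x :: g))%N ->
  (forall e, e \in x :: g -> a <= e <= b /\ `|f.[e]| = pmax f a b) ->
  sorted (sign_change (horner f)) (x :: g) -> equiosc t f a b.
Proof.
move=> tg ext /(pathP 0) alt; pose gamma s := nth 0 (x :: g) s.
have ext_gamma s : (s < t)%N -> a <= gamma s <= b /\ `|f.[gamma s]| = pmax f a b.
  by move=> st; apply/ext/mem_nth/(leq_trans st).
have alt_gamma s : (s.+1 < t)%N -> sign_change (horner f) (gamma s) (gamma s.+1).
  by move=> st; apply: alt; rewrite -ltnS (leq_trans st).
exists gamma; split; [|split; [|split]] => s st.
- by case: (ext_gamma s st).
- by case/andP: (alt_gamma s st).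
- by case: (ext_gamma s st).
- apply: opp_of_norm_eq_mul_lt0; last by case/andP: (alt_gamma s st).
  by rewrite (ext_gamma s (ltnW st)).2 (ext_gamma s.+1 st).2.
Qed.

Lemma size_prod_subX (c : seq R) :
  size (\prod_(ci <- c) (ci%:P - 'X)) = (size c).+1.
Proof.
elim: c => [|a c IHc] /=; first by rewrite big_nil size_poly1.
rewrite big_cons -opprB mulNr size_polyN size_mul ?polyXsubC_eq0 //.
  by rewrite size_XsubC IHc.
by rewrite -size_poly_eq0 IHc.
Qed.

Lemma horner_prod_subX (c : seq R) y :
  (\prod_(ci <- c) (ci%:P - 'X)).[y] = \prod_(ci <- c) (ci - y).
Proof. by rewrite horner_prod; apply: eq_bigr => ci _; rewrite !hornerE. Qed.

(* [h] is [q * X] when [s < 0] and [q * X * (w - X)] with [a < w < b] otherwise. *)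
Lemma neg_beyond_mulX q s a b : 0 < a < b -> s != 0 ->
  (forall y, b <= y -> 0 < s * q.[y]) ->
  exists h, [/\ (size h <= (size q).+2)%N, h.[0] = 0,
    forall y, b <= y -> h.[y] < 0 &
    forall y, 0 < y <= a -> exists2 k, 0 < k & h.[y] = k * q.[y]].
Proof.
move=> /andP[a0 ab] s0 sq; set w := (a + b) / 2.
pose r : {poly R} := if s < 0 then 1 else w%:P - 'X.
have size_r : (size r <= 2)%N.
  by rewrite /r; case: ifP => _; rewrite ?size_poly1 // -opprB size_polyN size_XsubC.
have r_gt0 y : y <= a -> 0 < r.[y].
  by rewrite /r; case: ifP => _ ya; rewrite !hornerE // subr_gt0 /w; lra.
have sr_lt0 y : b <= y -> s * r.[y] < 0.
  rewrite /r; case: ifP => [s_lt0 _|/negbT s_ge0 yb]; first by rewrite hornerC mulr1.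
  rewrite !hornerE pmulr_rlt0 ?subr_lt0 /w; first lra.
  by rewrite lt_neqAle eq_sym s0 leNgt.
exists (q * ('X * r)); split.
- have size_Xr : (size ('X * r)%R <= 3)%N.
    by apply: leq_trans (size_polyMleq _ _) _; rewrite size_polyX; lia.
  by apply: leq_trans (size_polyMleq _ _) _; lia.
- by rewrite !hornerM hornerX mul0r mulr0.
- move=> y by_; rewrite !hornerM hornerX mulrCA pmulr_rlt0; last lra.
  rewrite -oppr_gt0 -mulrN; apply: (mulr_gt0_trans (b := s)).
    by rewrite mulrC sq.
  by rewrite mulrN oppr_gt0 sr_lt0.
- move=> y /andP[y0 ya]; exists (y * r.[y]); last by rewrite !hornerM hornerX mulrC.
  by rewrite mulr_gt0 ?r_gt0.
Qed.

Lemma equiosc_or_descent_direction t f a b : 0 < a -> a < b -> f.[0] = 0 ->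
  equiosc t f 0 a \/ exists h, [/\ (size h <= t.+1)%N, h.[0] = 0,
    forall y, b <= y -> h.[y] < 0 &
    forall y, 0 <= y <= a -> `|f.[y]| = pmax f 0 a -> 0 < f.[y] * h.[y]].
Proof.
move=> a_gt0 ab f0; have a_ge0 := ltW a_gt0; set M := pmax f 0 a.
have [M0|M_neq0] := eqVneq M 0; first by left; apply: equiosc_pmax0.
have M_gt0 : 0 < M by rewrite lt_neqAle eq_sym M_neq0 pmax_ge0.
have [|s [sorted_s mem_s]] := @sorted_level_set f M 0 a (pmax_ge0 f a_ge0).
  by rewrite f0 normr0 eq_sym.
have extremal_in_s y : 0 <= y <= a -> `|f.[y]| = M -> y \in s.
  move=> /andP[y_ge0 ya] fyM; rewrite mem_s ya fyM eqxx lt_neqAle y_ge0 !andbT.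
  by rewrite eq_sym; apply: contra_neq M_neq0 => y0; rewrite -fyM y0 f0 normr0.
have [x0 x0a fx0] := pmax_attained f a_ge0.
case: s sorted_s mem_s extremal_in_s => [|x s] sorted_s mem_s extremal_in_s.
  by have := extremal_in_s x0 x0a (esym fx0).
have in_s e : e \in x :: s -> 0 < e <= a /\ `|f.[e]| = M.
  by rewrite mem_s => /andP[-> /eqP].
have [||c [g [cb cF sg gs alt]]] :=
  alternation_separators (F := horner f) (B := b) sorted_s.
- by apply/allP=> e /in_s [_ fe]; rewrite -normr_eq0 fe.
- by apply/allP=> e /in_s [/andP[_ ea] _]; apply: le_lt_trans ab.
have [tc|ct] := leqP t (size c).+1.
  left; apply: (equiosc_of_alternation _ _ alt); first by rewrite /= sg.
  move=> e eg; have /in_s [/andP[/ltW -> ->] ->] // : e \in x :: s.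
  by move: eg; rewrite inE => /predU1P[->|/gs //]; apply: mem_head.
right; pose q := f.[x] *: \prod_(ci <- c) (ci%:P - 'X).
have q_at y : q.[y] = f.[x] * \prod_(ci <- c) (ci - y).
  by rewrite hornerZ horner_prod_subX.
have fx_neq0 : f.[x] != 0 by rewrite -normr_eq0 (in_s x (mem_head _ _)).2.
have ab' : 0 < a < b by rewrite a_gt0.
have sgn_neq0 : f.[x] * (-1) ^+ size c != 0 by rewrite mulf_neq0 ?signr_eq0.
have sgn_q_gt0 y : b <= y -> 0 < f.[x] * (-1) ^+ size c * q.[y].
  move=> yb; rewrite q_at mulrACA mulr_gt0 //; first by rewrite -expr2 exprn_even_gt0.
  by apply/signr_prod_subr_gt0/allP=> ci /(allP cb) /andP[_ /lt_le_trans]; apply.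
have [h [sh h0 hb hq]] := neg_beyond_mulX ab' sgn_neq0 sgn_q_gt0.
exists h; split=> //.
- have size_q : (size q <= (size c).+1)%N.
    by rewrite -size_prod_subX size_scale_leq.
  by apply: leq_trans sh _; rewrite ltnS (leq_ltn_trans size_q ct).
- move=> y ya fyM; have /in_s [ya' _] := extremal_in_s y ya fyM.
  have [k k_gt0 ->] := hq y ya'; rewrite mulrCA mulr_gt0 // mulrC q_at.
  exact: cF (extremal_in_s y ya fyM).
Qed.

Lemma normB_lt_same_sign (x y M : R) :
  0 < x * y -> `|x| <= M -> `|y| < M -> `|x - y| < M.
Proof.
move=> xy; rewrite ler_norml ltr_norml => /andP[? ?] /andP[? ?].
by rewrite ltr_norml; apply/andP; split; nra.
Qed.

Lemma pmax_margin f h a b : a <= b ->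
  (forall y, a <= y <= b -> `|f.[y]| = pmax f a b -> 0 < f.[y] * h.[y]) ->
  exists2 delta, 0 < delta & forall y, a <= y <= b ->
    f.[y] * h.[y] <= 0 -> `|f.[y]| <= pmax f a b - delta.
Proof.
move=> ab fh_gt0; set M := pmax f a b; set k := f * h.
(* [th] is [|f|] minus the positive part of [f h]; it stays below the maximum
   because [f h > 0] at every extremal point. *)
pose th y := `|f.[y]| - (k.[y] + `|k.[y]|) / 2.
have th_cont : continuous th.
  move=> y; have := @continuousB _ _ _ (fun z => `|f.[z]|)
    (fun z => (k.[z] + `|k.[z]|) / 2) y.
  apply; first exact: continuous_norm_horner.
  have := @continuousM _ _ (fun z => k.[z] + `|k.[z]|) (fun=> 2^-1) y.
  apply; last exact: cst_continuous.
  have := @continuousD _ _ _ (horner k) (fun z => `|k.[z]|) y.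
  by apply; [exact: continuous_horner | exact: continuous_norm_horner].
have th_lt y : a <= y <= b -> th y < M.
  move=> yab; rewrite /th; have fyM : `|f.[y]| <= M := pmax_ub f yab.
  have [k_gt0|k_le0] := ltP 0 k.[y]; first by rewrite (gtr0_norm k_gt0); lra.
  rewrite (ler0_norm k_le0) subrr mul0r subr0 lt_neqAle fyM andbT.
  by apply: contraTneq k_le0 => fyM'; rewrite -ltNge hornerM fh_gt0.
have [y0 y0ab th_max] := EVT_max ab (continuous_subspaceT th_cont).
rewrite in_itv /= in y0ab.
exists (M - th y0); first by rewrite subr_gt0 th_lt.
move=> y yab; rewrite -hornerM -/k => k_le0.
have := th_max y; rewrite in_itv /= => /(_ yab).
by rewrite {1}/th (ler0_norm k_le0) subrr mul0r subr0; lra.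
Qed.

Lemma pmax_perturb_lt f h a b : a <= b ->
  (forall y, a <= y <= b -> `|f.[y]| = pmax f a b -> 0 < f.[y] * h.[y]) ->
  exists2 eps, 0 < eps & pmax (f - eps *: h) a b < pmax f a b.
Proof.
move=> ab fh_gt0; set M := pmax f a b.
have [x0 x0ab fx0] := pmax_attained f ab.
have M_gt0 : 0 < M.
  rewrite /M fx0 normr_gt0; apply: contraTneq (fh_gt0 _ x0ab (esym fx0)) => ->.
  by rewrite mul0r ltxx.
have [delta delta_gt0 margin] := pmax_margin ab fh_gt0.
set H := pmax h a b; set mu := Num.min delta M.
have H_ge0 : 0 <= H := pmax_ge0 h ab.
have mu_gt0 : 0 < mu by rewrite lt_min delta_gt0.
have [mu_delta mu_M] : mu <= delta /\ mu <= M by rewrite !ge_min !lexx ?orbT.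
pose eps := mu / (H + 1).
have eps_gt0 : 0 < eps by rewrite divr_gt0 //; lra.
have eps_h y : a <= y <= b -> `|eps * h.[y]| < mu.
  move=> yab; rewrite normrM gtr0_norm //.
  apply: le_lt_trans (ler_wpM2l (ltW eps_gt0) (pmax_ub h yab)) _.
  by rewrite /eps mulrAC -/H ltr_pdivrMr; nra.
exists eps => //; apply: pmax_lt => // y yab; rewrite hornerD hornerN hornerZ.
have := eps_h y yab; have [fh|fh] := ltP 0 (f.[y] * h.[y]) => ehy.
  apply: normB_lt_same_sign; first by rewrite mulrCA mulr_gt0.
    exact: pmax_ub.
  exact: lt_le_trans ehy mu_M.
have := margin y yab fh; rewrite -/M; have := ler_normB f.[y] (eps * h.[y]).
by lra.
Qed.

Lemma pmaxZ k p a b : 0 <= k -> a <= b -> pmax (k *: p) a b = k * pmax p a b.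
Proof.
move=> k_ge0 ab; apply/eqP; rewrite eq_le; apply/andP; split.
  have [c cab ->] := pmax_attained (k *: p) ab.
  by rewrite hornerZ normrM ger0_norm // ler_wpM2l // pmax_ub.
have [c cab ->] := pmax_attained p ab.
by have := pmax_ub (k *: p) cab; rewrite hornerZ normrM ger0_norm.
Qed.

Lemma pmin_scale_ge k p a b : 0 <= k -> a <= b ->
  k * pmin p a b <= pmin (k *: p) a b.
Proof.
move=> k_ge0 ab; apply: pmin_ge => // x xab.
by rewrite hornerZ normrM ger0_norm // ler_wpM2l // pmin_lb.
Qed.

Lemma pminZ k p a b : 0 < k -> a <= b -> pmin (k *: p) a b = k * pmin p a b.
Proof.
move=> k_gt0 ab; apply/eqP; rewrite eq_le (pmin_scale_ge _ (ltW k_gt0) ab) andbT.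
have := pmin_scale_ge (k *: p) (_ : 0 <= k^-1) ab.
by rewrite scalerA mulVf ?gt_eqF // scale1r ler_pdivrMl //; apply; rewrite invr_ge0 ltW.
Qed.

Lemma ratio_objZ alpha beta k p : 0 < k -> 0 <= alpha -> beta <= 1 ->
  ratio_obj alpha beta (k *: p) = ratio_obj alpha beta p.
Proof.
move=> k_gt0 alpha_ge0 beta_le1.
rewrite /ratio_obj (pmaxZ p (ltW k_gt0) alpha_ge0) (pminZ p k_gt0 beta_le1).
rewrite mulf_eq0 (gt_eqF k_gt0) /=; case: eqP => // _.
by rewrite -mulf_div divff ?gt_eqF // mul1r.
Qed.

Lemma horner_gt0_of_pmin_gt0 f a b : a <= b -> 0 < pmin f a b -> 0 < f.[b] ->
  forall y, a <= y <= b -> 0 < f.[y].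
Proof.
move=> ab m_gt0 fb y /andP[ay yb]; rewrite ltNge; apply/negP => fy.
have fyb : f.[y] <= 0 <= f.[b] by rewrite fy ltW.
have [z /andP[yz zb] /rootP fz] := @poly_ivt _ f y b yb fyb.
have := @pmin_lb f a b z; rewrite fz normr0 (le_trans ay yz) zb; lra.
Qed.

Lemma Pt'_X t : (1 <= t)%N -> Pt' t ('X : {poly R}).
Proof. by split; [rewrite size_polyX | rewrite !hornerX]. Qed.

Lemma pmin_X_gt0 b : 0 < b <= 1 -> 0 < pmin 'X b 1.
Proof.
case/andP=> b_gt0 b_le1; apply: (lt_le_trans b_gt0); apply: pmin_ge => // x /andP[bx _].
by rewrite hornerX ger0_norm // (le_trans (ltW b_gt0)).
Qed.

Lemma ratio_obj_descent t alpha beta f h :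
  0 < alpha -> alpha < beta -> beta <= 1 -> Pt' t f -> 0 < pmin f beta 1 ->
  (size h <= t.+1)%N -> h.[0] = 0 -> (forall y, beta <= y -> h.[y] < 0) ->
  (forall y, 0 <= y <= alpha -> `|f.[y]| = pmax f 0 alpha -> 0 < f.[y] * h.[y]) ->
  exists2 g, Pt' t g & (ratio_obj alpha beta g < ratio_obj alpha beta f)%E.
Proof.
move=> alpha_gt0 alpha_beta beta_le1 [sf [f0 f1]] m_gt0 sh h0 h_neg fh_gt0.
have [eps eps_gt0 pmaxG_lt] := pmax_perturb_lt (ltW alpha_gt0) fh_gt0.
set G := f - eps *: h.
have G_at y : G.[y] = f.[y] - eps * h.[y] by rewrite hornerD hornerN hornerZ.
have f1_gt0 : 0 < f.[1] by rewrite f1 ltr01.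
have f_pos := horner_gt0_of_pmin_gt0 beta_le1 m_gt0 f1_gt0.
have G1_gt1 : 1 < G.[1].
  by rewrite G_at f1 ltrDl oppr_gt0 pmulr_rlt0 // h_neg.
have pmin_le : pmin f beta 1 <= pmin G beta 1.
  apply: pmin_ge => // y yb; apply: le_trans (pmin_lb f yb) _.
  rewrite ger0_norm ?(ltW (f_pos y yb)) // G_at; apply: le_trans _ (ler_norm _).
  by rewrite lerDl oppr_ge0 pmulr_rle0 // ltW // h_neg //; case/andP: yb.
exists (G.[1]^-1 *: G).
  split; last split; rewrite ?hornerZ ?mulVf ?gt_eqF ?(lt_trans ltr01) //.
    apply: leq_trans (size_scale_leq _ _) _; apply: leq_trans (size_polyD _ _) _.
    by rewrite size_polyN geq_max sf (leq_trans (size_scale_leq _ _)).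
  by rewrite (G_at 0) f0 h0 mulr0 subr0 mulr0.
have G1_inv_gt0 : 0 < G.[1]^-1 by rewrite invr_gt0 (lt_trans ltr01).
rewrite (ratio_objZ G G1_inv_gt0 (ltW alpha_gt0) beta_le1) /ratio_obj.
rewrite (gt_eqF m_gt0) gt_eqF ?(lt_le_trans m_gt0 pmin_le) // lte_fin.
apply: le_lt_trans (_ : _ <= pmax G 0 alpha / pmin f beta 1) _.
  apply: ler_wpM2l; first exact/pmax_ge0/ltW.
  by rewrite lef_pV2 ?posrE // (lt_le_trans m_gt0).
by rewrite ltr_pM2r ?invr_gt0.
Qed.

End Equioscillation.

Unset Implicit Arguments.
Theorem lemma3 (R : realType) (alpha beta : R) (t : nat)
  (halpha : 0 < alpha) (hab : alpha < beta) (hbeta : beta < 1) (ht : (1 <= t)%N)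
  (fstar : {poly R}) (hf : Pt' t fstar)
  (hmin : forall g : {poly R}, Pt' t g ->
            (ratio_obj alpha beta fstar <= ratio_obj alpha beta g)%E) :
  equiosc t fstar 0 alpha.
Proof.
have m_gt0 : 0 < pmin fstar beta 1.
  rewrite lt0r (pmin_ge (ltW hbeta) (fun x _ => normr_ge0 fstar.[x])) andbT.
  apply/eqP=> m0; have := hmin 'X (Pt'_X _ ht).
  by rewrite /ratio_obj m0 eqxx gt_eqF // pmin_X_gt0 // (lt_trans halpha hab) ltW.
have [f0 _] := hf.2.
have [//|[h [sh h0 h_neg fh_gt0]]] := equiosc_or_descent_direction t halpha hab f0.
have [g Pg] := ratio_obj_descent halpha hab (ltW hbeta) hf m_gt0 sh h0 h_neg fh_gt0.
by rewrite ltNge hmin.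
Qed.
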